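(* Let $\alpha\in(\pi/8,3\pi/8)$ with $\alpha/\pi\notin\mathbb{Q}$, $\beta=\alpha-\pi/2$, $\rho=0.01$, $A_1=\rho R(\alpha)$, $A_2=\rho R(\beta)$ where $R(\theta)=\begin{bmatrix}\cos\theta&-\sin\theta\\ \sin\theta&\cos\theta\end{bmatrix}$, and $c(x)=x_1^2+2x_2^2$ on $\mathbb{R}^2$. Let $J^\star$ be the optimal value function, $\tilde J^\star(\theta)=J^\star([\cos\theta,\sin\theta]^\top)$, $\Delta\tilde J^\star(\theta)=\tilde J^\star(\theta+\alpha)-\tilde J^\star(\theta+\beta)$, $\mu=\pi/4-\alpha$, $\delta=0.01$, and let $\nu\in(\mu-\delta,\mu+\delta)$ satisfy $\Delta\tilde J^\star(\nu)=0$. Let $I=[\nu+\beta,\nu+\alpha)$ and $T:I\to I$ be defined by $T(\theta)=\theta+\alpha$ if $\theta<\nu$ and $T(\theta)=\theta+\beta$ if $\theta\geq\nu$. Then for every $k\in\mathbb{N}$, $\tilde J^\star$ is not differentiable at $T^{-k}\nu$.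
   Context: $T$ is a bijection of $I$ (an interval exchange map), so $T^{-k}$ is well defined. For the switched linear system $\xi(t+1)=A_{\sigma(t)}\xi(t)$ with $\sigma:\mathbb{N}\to\{1,2\}$, $J^\star(x)=\inf_\sigma\sum_{t=0}^\infty c(\xi(t,x,\sigma))$ where $\xi(t,x,\sigma)$ is the solution with $\xi(0)=x$. *)

From Stdlib Require Import Reals QArith Lra.
From Coquelicot Require Import Coquelicot.
Open Scope R_scope.

Definition rot (th : R) (x : R * R) : R * R :=
  (cos th * fst x - sin th * snd x, sin th * fst x + cos th * snd x).

Definition rho : R := 1 / 100.

Definition beta_of (alpha : R) : R := alpha - PI / 2.

(* A_1 = rho R(alpha), A_2 = rho R(beta).  Mode [true] = 1, [false] = 2. *)
Definition Amat (alpha : R) (m : bool) (x : R * R) : R * R :=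
  let y := rot (if m then alpha else beta_of alpha) x in (rho * fst y, rho * snd y).

Definition cost (x : R * R) : R := fst x ^ 2 + 2 * snd x ^ 2.

Fixpoint traj (alpha : R) (sigma : nat -> bool) (x : R * R) (t : nat) : R * R :=
  match t with
  | O => x
  | S t' => Amat alpha (sigma t') (traj alpha sigma x t')
  end.

Definition costs (alpha : R) (x : R * R) (v : R) : Prop :=
  exists sigma : nat -> bool, is_series (fun t => cost (traj alpha sigma x t)) v.

Definition Jstar (alpha : R) (x : R * R) : R :=
  real (Glb_Rbar (costs alpha x)).

Definition Jt (alpha : R) (th : R) : R := Jstar alpha (cos th, sin th).

Definition DJt (alpha : R) (th : R) : R :=
  Jt alpha (th + alpha) - Jt alpha (th + beta_of alpha).

Definition Tmap (alpha nu : R) (th : R) : R :=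
  if Rlt_dec th nu then th + alpha else th + beta_of alpha.

Definition in_I (alpha nu th : R) : Prop :=
  nu + beta_of alpha <= th < nu + alpha.

From Stdlib Require Import Reals QArith Lra.
From Coquelicot Require Import Coquelicot.
Open Scope R_scope.

(* Starting from (cos θ, sin θ), every trajectory stays of the form
   ρ^t (cos φ_t, sin φ_t) with φ_t = θ + (sum of the chosen angles), so J̃ is the
   optimal value of a discounted problem on angles, with stage cost
   c(θ) = 1 + sin² θ and discount r = ρ²; it satisfies the Bellman equation
   J̃(θ) = c(θ) + r min(J̃(θ+α), J̃(θ+β)).  Since r is tiny, J̃ - c is Lipschitz
   with a tiny constant, so ΔJ̃ is close to c(θ+α) - c(θ+β), which crosses zero
   transversally; hence ΔJ̃ has the sign of θ - ν on a neighbourhood of I.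
   At ν the minimum switches branch, and since J̃ is semiconcave this produces
   a concave kink: the second difference at ν is ≤ C τ² - κ τ, which rules out
   differentiability.  At any other y ∈ I the branch used at θ near y is fixed,
   so near T y the Bellman equation writes J̃ as a translate of (J̃ - c)/r; thus
   differentiability at y propagates to T y, and induction on k concludes. *)

Lemma Series_le_compat (a b : nat -> R) :
  (forall n, a n <= b n) -> ex_series a -> ex_series b -> Series a <= Series b.
Proof.
  intros Hab Ha Hb.
  assert (H : Series (fun n => 0 * (b n - a n)) <= Series (fun n => b n - a n)).
  { apply Series_le; [intros n; specialize (Hab n); lra |].
    now apply (ex_series_minus b a). }
  rewrite Series_scal_l, Series_minus in H by assumption. lra.
Qed.

Section DiscountedRotation.

Variables (c : R -> R) (a : bool -> R) (r : R).
Hypothesis r_pos : 0 < r.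
Hypothesis r_lt_1 : r < 1.

Fixpoint heading (s : nat -> bool) (t : nat) : R :=
  match t with
  | O => 0
  | S t' => heading s t' + a (s t')
  end.

Definition value (s : nat -> bool) (th : R) : R :=
  Series (fun t => r ^ t * c (th + heading s t)).

Definition optval (th : R) : R :=
  real (Glb_Rbar (fun v => exists s, v = value s th)).

Lemma is_series_discount : is_series (fun t => r ^ t) (/ (1 - r)).
Proof. apply is_series_geom. rewrite Rabs_pos_eq; lra. Qed.

Lemma ex_series_discount (C : R) : ex_series (fun t => C * r ^ t).
Proof. apply (ex_series_scal_l C (fun t => r ^ t)). eexists. apply is_series_discount. Qed.

Lemma Series_discount (C : R) : Series (fun t => C * r ^ t) = C / (1 - r).
Proof.
  rewrite Series_scal_l, (is_series_unique (pow r) _ is_series_discount). reflexivity.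
Qed.

Variable M : R.
Hypothesis c_nonneg : forall x, 0 <= c x.
Hypothesis c_le : forall x, c x <= M.

Lemma ex_series_value (s : nat -> bool) (th : R) :
  ex_series (fun t => r ^ t * c (th + heading s t)).
Proof.
  apply (@ex_series_le R_AbsRing R_CompleteNormedModule _ (fun t => M * r ^ t));
    [| apply ex_series_discount].
  intros t. change (norm ?x) with (Rabs x).
  pose proof (pow_lt r t r_pos). specialize (c_nonneg (th + heading s t)).
  specialize (c_le (th + heading s t)).
  rewrite Rabs_pos_eq; nra.
Qed.

Lemma value_nonneg (s : nat -> bool) (th : R) : 0 <= value s th.
Proof.
  unfold value. apply Rle_trans with (0 / (1 - r)); [unfold Rdiv; lra |].
  rewrite <- Series_discount.
  apply Series_le_compat; [| apply ex_series_discount | apply ex_series_value].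
  intros t. pose proof (pow_lt r t r_pos). specialize (c_nonneg (th + heading s t)). nra.
Qed.

Lemma heading_succ (s : nat -> bool) (t : nat) :
  heading s (S t) = a (s O) + heading (fun n => s (S n)) t.
Proof. induction t as [| t IH]; simpl in *; [| rewrite IH]; ring. Qed.

Lemma value_cons (s : nat -> bool) (th : R) :
  value s th = c th + r * value (fun n => s (S n)) (th + a (s O)).
Proof.
  unfold value. rewrite Series_incr_1 by apply ex_series_value.
  rewrite <- Series_scal_l. f_equal.
  - simpl. rewrite Rplus_0_r. ring.
  - apply Series_ext. intros t.
    rewrite heading_succ, Rplus_assoc. change (r ^ S t) with (r * r ^ t). ring.
Qed.

Lemma optval_spec (th : R) :
  (forall s, optval th <= value s th) /\
  (forall B, (forall s, B <= value s th) -> B <= optval th).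
Proof.
  unfold optval.
  destruct (Glb_Rbar_correct (fun v => exists s, v = value s th)) as [Hlb Hglb].
  set (G := Glb_Rbar _) in *. clearbody G.
  assert (HG0 : Rbar_le 0 G).
  { apply Hglb. intros v [s ->]. apply value_nonneg. }
  assert (HGs : forall s, Rbar_le G (value s th)) by (intros s; apply Hlb; now exists s).
  destruct G as [g | |]; simpl in *.
  - split; [exact HGs |]. intros B HB. apply (Hglb B). intros v [s ->]. apply HB.
  - destruct (HGs (fun _ => true)).
  - destruct HG0.
Qed.

Lemma optval_le_value (s : nat -> bool) (th : R) : optval th <= value s th.
Proof. apply optval_spec. Qed.

Lemma optval_ge (B th : R) : (forall s, B <= value s th) -> B <= optval th.
Proof. apply optval_spec. Qed.

Lemma optval_bellman (th : R) :
  optval th = c th + r * Rmin (optval (th + a true)) (optval (th + a false)).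
Proof.
  apply Rle_antisym.
  - assert (Hstep : forall m, optval th <= c th + r * optval (th + a m)).
    { intros m.
      enough (H : (optval th - c th) / r <= optval (th + a m))
        by (apply Rle_div_l in H; lra).
      apply optval_ge. intros s. apply Rle_div_l; [exact r_pos |].
      pose proof (optval_le_value (fun n => match n with O => m | S n' => s n' end) th) as H.
      rewrite value_cons in H.
      change (optval th <= c th + r * value s (th + a m)) in H. lra. }
    unfold Rmin. destruct (Rle_dec _ _); apply Hstep.
  - apply optval_ge. intros s. rewrite value_cons.
    pose proof (optval_le_value (fun n => s (S n)) (th + a (s O))).
    assert (Rmin (optval (th + a true)) (optval (th + a false)) <= optval (th + a (s O)))
      by (destruct (s O); [apply Rmin_l | apply Rmin_r]).
    nra.
Qed.

Lemma value_lipschitz (L : R) :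
  (forall x y, Rabs (c x - c y) <= L * Rabs (x - y)) ->
  forall s x y, Rabs (value s x - value s y) <= L / (1 - r) * Rabs (x - y).
Proof.
  intros Hc s x y. unfold value.
  rewrite <- Series_minus by apply ex_series_value.
  assert (Hterm : forall t,
    Rabs (r ^ t * c (x + heading s t) - r ^ t * c (y + heading s t))
      <= L * Rabs (x - y) * r ^ t).
  { intros t. rewrite <- Rmult_minus_distr_l, Rabs_mult, (Rabs_pos_eq (r ^ t))
      by (apply pow_le; lra).
    specialize (Hc (x + heading s t) (y + heading s t)).
    replace (x + heading s t - (y + heading s t)) with (x - y) in Hc by ring.
    pose proof (pow_le r t (Rlt_le _ _ r_pos)). nra. }
  assert (Hsum : ex_series (fun t =>
    Rabs (r ^ t * c (x + heading s t) - r ^ t * c (y + heading s t)))).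
  { apply (@ex_series_le R_AbsRing R_CompleteNormedModule _ (fun t => L * Rabs (x - y) * r ^ t));
      [| apply ex_series_discount].
    intros t. change (norm ?z) with (Rabs z). rewrite Rabs_Rabsolu. apply Hterm. }
  eapply Rle_trans; [apply Series_Rabs, Hsum |].
  replace (L / (1 - r) * Rabs (x - y)) with (L * Rabs (x - y) / (1 - r)) by (field; lra).
  rewrite <- Series_discount.
  apply Series_le_compat; [exact Hterm | exact Hsum | apply ex_series_discount].
Qed.

Lemma optval_sub_cost_lipschitz (L : R) :
  (forall x y, Rabs (c x - c y) <= L * Rabs (x - y)) ->
  forall x y, Rabs ((optval x - c x) - (optval y - c y)) <= r * L / (1 - r) * Rabs (x - y).
Proof.
  intros Hc.
  assert (Hhalf : forall x y, optval x - c x <= optval y - c y + r * L / (1 - r) * Rabs (x - y)).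
  { intros x y.
    enough (optval x - c x + c y - r * L / (1 - r) * Rabs (x - y) <= optval y) by lra.
    apply optval_ge. intros s.
    pose proof (optval_le_value s x) as Hx. rewrite value_cons in Hx |- *.
    pose proof (value_lipschitz L Hc (fun n => s (S n)) (x + a (s O)) (y + a (s O))) as Hv.
    replace (x + a (s O) - (y + a (s O))) with (x - y) in Hv by ring.
    apply Rabs_le_between in Hv.
    replace (r * L / (1 - r) * Rabs (x - y)) with (r * (L / (1 - r) * Rabs (x - y)))
      by (field; lra).
    nra. }
  intros x y. apply Rabs_le. pose proof (Hhalf x y) as Hxy. pose proof (Hhalf y x) as Hyx.
  rewrite Rabs_minus_sym in Hyx. lra.
Qed.

Lemma value_semiconcave (K : R) :
  (forall p t, c (p + t) + c (p - t) - 2 * c p <= K * t ^ 2) ->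
  forall s p t, value s (p + t) + value s (p - t) - 2 * value s p <= K / (1 - r) * t ^ 2.
Proof.
  intros Hc s p t. unfold value.
  pose proof (ex_series_value s (p + t)) as Ep.
  pose proof (ex_series_value s (p - t)) as Em.
  pose proof (ex_series_value s p) as E0.
  assert (Esum : ex_series (fun n =>
    r ^ n * c (p + t + heading s n) + r ^ n * c (p - t + heading s n)))
    by exact (ex_series_plus _ _ Ep Em).
  assert (E2 : ex_series (fun n => 2 * (r ^ n * c (p + heading s n))))
    by exact (ex_series_scal_l 2 _ E0).
  rewrite <- (Series_plus _ _ Ep Em), <- Series_scal_l, <- (Series_minus _ _ Esum E2).
  replace (K / (1 - r) * t ^ 2) with (K * t ^ 2 / (1 - r)) by (field; lra).
  rewrite <- Series_discount.
  apply Series_le_compat.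
  - intros n. specialize (Hc (p + heading s n) t).
    replace (p + heading s n + t) with (p + t + heading s n) in Hc by ring.
    replace (p + heading s n - t) with (p - t + heading s n) in Hc by ring.
    pose proof (pow_le r n (Rlt_le _ _ r_pos)). nra.
  - exact (ex_series_minus _ _ Esum E2).
  - apply ex_series_discount.
Qed.

Lemma optval_semiconcave (K : R) :
  (forall p t, c (p + t) + c (p - t) - 2 * c p <= K * t ^ 2) ->
  forall p t, optval (p + t) + optval (p - t) - 2 * optval p <= K / (1 - r) * t ^ 2.
Proof.
  intros Hc p t.
  enough ((optval (p + t) + optval (p - t) - K / (1 - r) * t ^ 2) / 2 <= optval p) by lra.
  apply optval_ge. intros s.
  pose proof (value_semiconcave K Hc s p t).
  pose proof (optval_le_value s (p + t)). pose proof (optval_le_value s (p - t)). lra.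
Qed.

End DiscountedRotation.

Lemma ex_derive_translate_loc (f h : R -> R) (y g : R) :
  ex_derive h y -> locally (y + g) (fun z => h (z - g) = f z) -> ex_derive f (y + g).
Proof.
  intros Hh Hloc. apply (ex_derive_ext_loc _ _ _ Hloc).
  apply (ex_derive_comp h (fun z => z - g)).
  - now replace (y + g - g) with y by ring.
  - auto_derive. exact I.
Qed.

Lemma is_derive_second_difference_ge (f : R -> R) (x d eps : R) :
  is_derive f x d -> 0 < eps ->
  exists delta, 0 < delta /\ forall tau, 0 < tau < delta ->
    - eps * tau <= f (x + tau) + f (x - tau) - 2 * f x.
Proof.
  intros Hder Heps. apply is_derive_Reals in Hder.
  destruct (Hder (eps / 2)) as [e He]; [lra |].
  exists e. split; [apply cond_pos |]. intros tau Htau.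
  assert (Hright : (d - eps / 2) * tau <= f (x + tau) - f x).
  { specialize (He tau ltac:(lra) ltac:(rewrite Rabs_pos_eq; lra)).
    apply Rabs_lt_between in He.
    set (q := (f (x + tau) - f x) / tau) in He.
    replace (f (x + tau) - f x) with (q * tau) by (unfold q; field; lra). nra. }
  assert (Hleft : (- d - eps / 2) * tau <= f (x - tau) - f x).
  { specialize (He (- tau) ltac:(lra) ltac:(rewrite Rabs_Ropp, Rabs_pos_eq; lra)).
    apply Rabs_lt_between in He.
    set (q := (f (x + - tau) - f x) / - tau) in He.
    replace (f (x - tau) - f x) with (- q * tau) by (unfold q, Rminus; field; lra). nra. }
  lra.
Qed.

Lemma not_ex_derive_of_kink (f : R -> R) (x C kappa delta : R) :
  0 < kappa -> 0 < delta ->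
  (forall tau, 0 < tau < delta ->
     f (x + tau) + f (x - tau) - 2 * f x <= C * tau ^ 2 - kappa * tau) ->
  ~ ex_derive f x.
Proof.
  intros Hk Hd Hkink [d Hder].
  destruct (is_derive_second_difference_ge f x d (kappa / 2) Hder) as [e [He Hsd]]; [lra |].
  set (eta := kappa / (2 * (Rabs C + 1))).
  assert (HC : 0 < Rabs C + 1) by (pose proof (Rabs_pos C); lra).
  assert (Heta : Rabs C * eta < kappa / 2).
  { unfold eta. apply Rmult_lt_reg_r with (2 * (Rabs C + 1)); [lra |].
    field_simplify; [nra | lra]. }
  set (tau := Rmin (Rmin e delta) eta / 2).
  assert (Hpos : 0 < Rmin (Rmin e delta) eta)
    by (repeat apply Rmin_pos; try lra; apply Rdiv_lt_0_compat; lra).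
  pose proof (Rmin_l (Rmin e delta) eta). pose proof (Rmin_r (Rmin e delta) eta).
  pose proof (Rmin_l e delta). pose proof (Rmin_r e delta).
  specialize (Hsd tau ltac:(unfold tau; lra)).
  specialize (Hkink tau ltac:(unfold tau; lra)).
  assert (C * tau < kappa / 2).
  { pose proof (Rle_abs C). pose proof (Rabs_pos C). unfold tau. nra. }
  assert (0 < tau) by (unfold tau; lra).
  nra.
Qed.

Lemma sin_sqr_lipschitz (x y : R) : Rabs (sin x ^ 2 - sin y ^ 2) <= Rabs (x - y).
Proof.
  rewrite <- (Rmult_1_l (Rabs (x - y))).
  apply (bounded_variation (fun t => sin t ^ 2) (fun t => 2 * sin t * cos t)).
  intros t _. split.
  - auto_derive; [exact I | ring].
  - pose proof (sin2_cos2 t). unfold Rsqr in *. apply Rabs_le.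
    pose proof (pow2_ge_0 (sin t - cos t)). pose proof (pow2_ge_0 (sin t + cos t)).
    split; nra.
Qed.

Lemma sin_sqr_le_sqr (t : R) : sin t ^ 2 <= t ^ 2.
Proof.
  assert (H : Rabs (sin t - sin 0) <= 1 * Rabs (t - 0)).
  { apply (bounded_variation sin cos). intros u _. split.
    - auto_derive; [exact I | ring].
    - apply Rabs_le, COS_bound. }
  rewrite sin_0, !Rminus_0_r, Rmult_1_l in H.
  rewrite <- (pow2_abs (sin t)), <- (pow2_abs t).
  pose proof (Rabs_pos (sin t)). nra.
Qed.

Lemma sin_sqr_semiconcave (p t : R) :
  sin (p + t) ^ 2 + sin (p - t) ^ 2 - 2 * sin p ^ 2 <= 2 * t ^ 2.
Proof.
  assert (Hcos2 : sin (p + t) ^ 2 + sin (p - t) ^ 2 - 2 * sin p ^ 2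
                  = 2 * sin t ^ 2 * (cos p ^ 2 - sin p ^ 2)).
  { rewrite sin_plus, sin_minus.
    pose proof (sin2_cos2 p). pose proof (sin2_cos2 t). unfold Rsqr in *. nra. }
  rewrite Hcos2. pose proof (sin_sqr_le_sqr t). pose proof (sin2_cos2 p). unfold Rsqr in *.
  assert (0 <= sin t ^ 2) by nra. nra.
Qed.

Lemma PI_bounds : 3 < PI <= 4.
Proof. pose proof PI2_3_2. pose proof PI_4. lra. Qed.

Lemma sqr_le_2_mul_sin (x : R) : Rabs x <= 8 / 5 -> x ^ 2 <= 2 * (x * sin x).
Proof.
  assert (Hpos : forall z, 0 <= z <= 8 / 5 -> z ^ 2 <= 2 * (z * sin z)).
  { intros z Hz. pose proof PI_bounds.
    destruct (sin_bound z 0 ltac:(lra) ltac:(lra)) as [Hsin _].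
    replace (sin_approx z (2 * 0 + 1)) with (z - z ^ 3 / 6) in Hsin
      by (unfold sin_approx, sin_term; simpl; field).
    assert (z * (z - z ^ 3 / 6) <= z * sin z) by (apply Rmult_le_compat_l; lra).
    assert (z ^ 2 * z ^ 2 <= 3 * z ^ 2) by (apply Rmult_le_compat_r; nra).
    nra. }
  intros Hx. destruct (Rle_dec 0 x) as [H0 | H0].
  - apply Hpos. rewrite Rabs_pos_eq in Hx; lra.
  - rewrite Rabs_left in Hx by lra.
    replace (x ^ 2) with ((- x) ^ 2) by ring.
    replace (x * sin x) with (- x * sin (- x)) by (rewrite sin_neg; ring).
    apply Hpos. lra.
Qed.

Lemma sin_ge_1_6 (p : R) : PI / 8 - 3 / 100 <= p <= 7 * PI / 8 + 3 / 100 -> 1 / 6 <= sin p.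
Proof.
  intros Hp. pose proof PI_bounds.
  set (z := PI / 8 - 3 / 100).
  assert (Hz : z ^ 2 <= 2 * (z * sin z))
    by (apply sqr_le_2_mul_sin; rewrite Rabs_pos_eq; unfold z; lra).
  assert (Hsz : z / 2 <= sin z).
  { assert (0 < z) by (unfold z; lra). apply (Rmult_le_reg_l z); [lra | nra]. }
  assert (1 / 6 <= z / 2) by (unfold z; lra).
  destruct (Rle_dec p (PI / 2)).
  - assert (sin z <= sin p) by (apply sin_incr_1; unfold z in *; lra). lra.
  - rewrite <- sin_PI_x.
    assert (sin z <= sin (PI - p)) by (apply sin_incr_1; unfold z in *; lra). lra.
Qed.

Lemma sin_sqr_sub_cos_sqr_diff (x y : R) :
  (sin x ^ 2 - cos x ^ 2) - (sin y ^ 2 - cos y ^ 2) = 2 * sin (x + y) * sin (x - y).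
Proof.
  rewrite sin_plus, sin_minus.
  transitivity (2 * (sin x ^ 2 * cos y ^ 2 - cos x ^ 2 * sin y ^ 2)); [| ring].
  pose proof (sin2_cos2 x) as Hx. pose proof (sin2_cos2 y) as Hy. unfold Rsqr in *.
  replace (cos x ^ 2) with (1 - sin x ^ 2) by (rewrite <- Hx; ring).
  replace (cos y ^ 2) with (1 - sin y ^ 2) by (rewrite <- Hy; ring).
  ring.
Qed.

Definition ang (alpha : R) (m : bool) : R := if m then alpha else beta_of alpha.

Definition circle_cost (th : R) : R := 1 + sin th ^ 2.

Definition discount : R := rho ^ 2.

Lemma discount_val : discount = 1 / 10000.
Proof. unfold discount, rho. field. Qed.

Lemma discount_pos : 0 < discount.
Proof. rewrite discount_val. lra. Qed.

Lemma discount_lt_1 : discount < 1.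
Proof. rewrite discount_val. lra. Qed.

Lemma circle_cost_nonneg (th : R) : 0 <= circle_cost th.
Proof. unfold circle_cost. nra. Qed.

Lemma circle_cost_le_2 (th : R) : circle_cost th <= 2.
Proof. unfold circle_cost. pose proof (SIN_bound th). nra. Qed.

Lemma traj_polar (alpha : R) (s : nat -> bool) (th : R) (t : nat) :
  traj alpha s (cos th, sin th) t =
  (rho ^ t * cos (th + heading (ang alpha) s t), rho ^ t * sin (th + heading (ang alpha) s t)).
Proof.
  induction t as [| t IH]; simpl.
  - rewrite Rplus_0_r, !Rmult_1_l. reflexivity.
  - rewrite IH. unfold Amat, rot. simpl.
    rewrite <- Rplus_assoc, (cos_plus (th + _)), (sin_plus (th + _)).
    destruct (s t); unfold ang; f_equal; ring.
Qed.

Lemma cost_traj_polar (alpha : R) (s : nat -> bool) (th : R) (t : nat) :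
  cost (traj alpha s (cos th, sin th) t) =
  discount ^ t * circle_cost (th + heading (ang alpha) s t).
Proof.
  rewrite traj_polar. unfold cost, circle_cost, discount. simpl fst; simpl snd.
  set (x := th + heading (ang alpha) s t).
  pose proof (sin2_cos2 x) as Hx. unfold Rsqr in Hx.
  rewrite <- pow_mult, Nat.mul_comm, pow_mult.
  rewrite <- Hx. ring.
Qed.

Lemma Jt_optval (alpha th : R) : Jt alpha th = optval circle_cost (ang alpha) discount th.
Proof.
  unfold Jt, Jstar, optval. f_equal. apply Glb_Rbar_eqset. intros v. split.
  - intros [s Hs]. exists s. symmetry. apply is_series_unique.
    eapply is_series_ext; [| exact Hs]. intros t. apply cost_traj_polar.
  - intros [s ->]. exists s. unfold value.
    eapply is_series_ext; [intros t; symmetry; apply cost_traj_polar |].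
    apply Series_correct.
    exact (ex_series_value _ _ _ discount_pos discount_lt_1 _
             circle_cost_nonneg circle_cost_le_2 s th).
Qed.

Lemma circle_cost_lipschitz (x y : R) :
  Rabs (circle_cost x - circle_cost y) <= 1 * Rabs (x - y).
Proof.
  unfold circle_cost. rewrite Rmult_1_l.
  replace (1 + sin x ^ 2 - (1 + sin y ^ 2)) with (sin x ^ 2 - sin y ^ 2) by ring.
  apply sin_sqr_lipschitz.
Qed.

Lemma circle_cost_semiconcave (p t : R) :
  circle_cost (p + t) + circle_cost (p - t) - 2 * circle_cost p <= 2 * t ^ 2.
Proof. unfold circle_cost. pose proof (sin_sqr_semiconcave p t). lra. Qed.

Lemma Jt_bellman (alpha th : R) :
  Jt alpha th =
  circle_cost th + discount * Rmin (Jt alpha (th + alpha)) (Jt alpha (th + beta_of alpha)).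
Proof.
  rewrite !Jt_optval.
  exact (optval_bellman _ _ _ discount_pos discount_lt_1 _
           circle_cost_nonneg circle_cost_le_2 th).
Qed.

Lemma Jt_sub_cost_lipschitz (alpha x y : R) :
  Rabs ((Jt alpha x - circle_cost x) - (Jt alpha y - circle_cost y)) <= Rabs (x - y) / 9999.
Proof.
  rewrite !Jt_optval.
  replace (Rabs (x - y) / 9999) with (discount * 1 / (1 - discount) * Rabs (x - y))
    by (rewrite discount_val; field).
  exact (optval_sub_cost_lipschitz _ _ _ discount_pos discount_lt_1 _
           circle_cost_nonneg circle_cost_le_2 1 circle_cost_lipschitz x y).
Qed.

Lemma Jt_semiconcave (alpha p t : R) :
  Jt alpha (p + t) + Jt alpha (p - t) - 2 * Jt alpha p <= 3 * t ^ 2.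
Proof.
  rewrite !Jt_optval.
  eapply Rle_trans.
  - exact (optval_semiconcave _ _ _ discount_pos discount_lt_1 _
             circle_cost_nonneg circle_cost_le_2 2 circle_cost_semiconcave p t).
  - apply Rmult_le_compat_r; [apply pow2_ge_0 |].
    rewrite discount_val. apply Rle_div_l; lra.
Qed.

Lemma Jt_step_alpha (alpha th : R) :
  DJt alpha th <= 0 -> Jt alpha th = circle_cost th + discount * Jt alpha (th + alpha).
Proof. unfold DJt. intros H. rewrite Jt_bellman, Rmin_left by lra. reflexivity. Qed.

Lemma Jt_step_beta (alpha th : R) :
  0 <= DJt alpha th -> Jt alpha th = circle_cost th + discount * Jt alpha (th + beta_of alpha).
Proof. unfold DJt. intros H. rewrite Jt_bellman, Rmin_right by lra. reflexivity. Qed.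

Lemma DJt_increment (alpha nu th : R) :
  Rabs (DJt alpha th - DJt alpha nu - 2 * sin (th + nu + 2 * alpha) * sin (th - nu))
    <= 2 * Rabs (th - nu) / 9999.
Proof.
  assert (Hcost : forall x, circle_cost (x + beta_of alpha) = 1 + cos (x + alpha) ^ 2).
  { intros x. unfold circle_cost, beta_of.
    replace (x + (alpha - PI / 2)) with (x + alpha - PI / 2) by ring.
    rewrite sin_minus, sin_PI2, cos_PI2. ring. }
  pose proof (sin_sqr_sub_cos_sqr_diff (th + alpha) (nu + alpha)) as Htrig.
  replace (th + alpha + (nu + alpha)) with (th + nu + 2 * alpha) in Htrig by ring.
  replace (th + alpha - (nu + alpha)) with (th - nu) in Htrig by ring.
  pose proof (Jt_sub_cost_lipschitz alpha (th + alpha) (nu + alpha)) as Ha.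
  pose proof (Jt_sub_cost_lipschitz alpha (th + beta_of alpha) (nu + beta_of alpha)) as Hb.
  replace (th + alpha - (nu + alpha)) with (th - nu) in Ha by ring.
  replace (th + beta_of alpha - (nu + beta_of alpha)) with (th - nu) in Hb by ring.
  rewrite !Hcost in Hb.
  unfold DJt. rewrite <- Htrig.
  unfold circle_cost in Ha.
  apply Rabs_le_between in Ha. apply Rabs_le_between in Hb. apply Rabs_le. lra.
Qed.

Lemma Tmap_in_I (alpha nu y : R) :
  PI / 8 < alpha < 3 * PI / 8 -> in_I alpha nu y -> in_I alpha nu (Tmap alpha nu y).
Proof.
  intros Halpha. pose proof PI_bounds.
  unfold in_I, Tmap, beta_of. destruct (Rlt_dec y nu); lra.
Qed.

Section SwitchingAngle.

Variables alpha nu : R.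
Hypothesis Halpha : PI / 8 < alpha < 3 * PI / 8.
Hypothesis Hnu : PI / 4 - alpha - (1/100) < nu < PI / 4 - alpha + (1/100).
Hypothesis Hroot : DJt alpha nu = 0.

Lemma DJt_transversal (th : R) :
  nu + beta_of alpha - 1 / 100 < th < nu + alpha ->
  (th - nu) ^ 2 / 10 <= (th - nu) * DJt alpha th.
Proof.
  intros Hth. pose proof PI_bounds. unfold beta_of in Hth.
  set (X := th - nu).
  pose proof (DJt_increment alpha nu th) as Hinc. rewrite Hroot, Rminus_0_r in Hinc.
  fold X in Hinc.
  assert (HX : X ^ 2 <= 2 * (X * sin X)) by (apply sqr_le_2_mul_sin, Rabs_le; unfold X; lra).
  assert (HS : 1 / 6 <= sin (th + nu + 2 * alpha)) by (apply sin_ge_1_6; lra).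
  set (S := sin (th + nu + 2 * alpha)) in *.
  assert (Hmain : X ^ 2 / 6 <= 2 * S * (X * sin X)) by nra.
  assert (Herr : Rabs (X * (DJt alpha th - 2 * S * sin X)) <= 2 * X ^ 2 / 9999).
  { rewrite Rabs_mult, <- (pow2_abs X).
    pose proof (Rabs_pos X). unfold Rdiv in *. nra. }
  apply Rabs_le_between in Herr. nra.
Qed.

Lemma DJt_neg_left (th : R) :
  nu + beta_of alpha - 1 / 100 < th < nu -> DJt alpha th < 0.
Proof.
  intros Hth. pose proof (DJt_transversal th) as H.
  assert (nu < nu + alpha) by (pose proof PI_bounds; lra).
  specialize (H ltac:(lra)). nra.
Qed.

Lemma DJt_pos_right (th : R) :
  nu < th < nu + alpha -> (th - nu) / 10 <= DJt alpha th.
Proof.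
  intros Hth. pose proof (DJt_transversal th) as H.
  assert (beta_of alpha < 0) by (unfold beta_of; pose proof PI_bounds; lra).
  specialize (H ltac:(lra)). nra.
Qed.

Lemma Jt_kink (tau : R) :
  0 < tau < 1 / 100 ->
  Jt alpha (nu + tau) + Jt alpha (nu - tau) - 2 * Jt alpha nu <= 3 * tau ^ 2 - tau / 100000.
Proof.
  intros Htau. pose proof PI_bounds.
  assert (Hb : beta_of alpha < 0) by (unfold beta_of; lra).
  pose proof (DJt_pos_right (nu + tau) ltac:(lra)) as Hright.
  pose proof (DJt_neg_left (nu - tau) ltac:(lra)) as Hleft.
  rewrite (Jt_step_beta alpha (nu + tau)) by lra.
  rewrite (Jt_step_alpha alpha (nu - tau)) by lra.
  rewrite (Jt_step_alpha alpha nu) by lra.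
  pose proof (Jt_semiconcave alpha (nu + alpha) tau) as Hsc.
  replace (nu + alpha + tau) with (nu + tau + alpha) in Hsc by ring.
  replace (nu + alpha - tau) with (nu - tau + alpha) in Hsc by ring.
  pose proof (circle_cost_semiconcave nu tau).
  unfold DJt in Hright. rewrite discount_val.
  replace ((nu + tau - nu) / 10) with (tau / 10) in Hright by field.
  assert (0 <= tau ^ 2) by apply pow2_ge_0.
  lra.
Qed.

Lemma not_ex_derive_Jt_nu : ~ ex_derive (Jt alpha) nu.
Proof.
  apply (not_ex_derive_of_kink _ _ 3 (1 / 100000) (1 / 100)); [lra | lra |].
  intros tau Htau. replace (1 / 100000 * tau) with (tau / 100000) by field.
  now apply Jt_kink.
Qed.

Lemma ex_derive_Jt_Tmap (y : R) :
  in_I alpha nu y -> y <> nu -> ex_derive (Jt alpha) y -> ex_derive (Jt alpha) (Tmap alpha nu y).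
Proof.
  intros HI Hne Hder. pose proof PI_bounds. unfold in_I in HI.
  set (h := fun w => / discount * (Jt alpha w - circle_cost w)).
  assert (Hh : ex_derive h y).
  { apply (ex_derive_scal (fun w => Jt alpha w - circle_cost w)).
    apply (ex_derive_minus (Jt alpha) circle_cost); [exact Hder |].
    unfold circle_cost. auto_derive. exact I. }
  assert (Hh_step : forall th g, Jt alpha th = circle_cost th + discount * Jt alpha (th + g) ->
                      h th = Jt alpha (th + g)).
  { intros th g Hstep. unfold h. rewrite Hstep. field. apply Rgt_not_eq, discount_pos. }
  unfold Tmap. destruct (Rlt_dec y nu) as [Hlt | Hge].
  - apply (ex_derive_translate_loc _ h); [exact Hh |].
    apply (locally_interval _ _ (nu + beta_of alpha - 1 / 100 + alpha) (nu + alpha));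
      simpl; [lra | lra |].
    intros z Hz1 Hz2.
    rewrite (Hh_step _ alpha); [f_equal; ring |].
    apply Jt_step_alpha, Rlt_le, DJt_neg_left. lra.
  - assert (Hgt : nu < y) by (destruct (Req_dec y nu); [contradiction | lra]).
    apply (ex_derive_translate_loc _ h); [exact Hh |].
    apply (locally_interval _ _ (nu + beta_of alpha) (nu + alpha + beta_of alpha));
      simpl; [lra | lra |].
    intros z Hz1 Hz2.
    rewrite (Hh_step _ (beta_of alpha)); [f_equal; ring |].
    apply Jt_step_beta. eapply Rle_trans; [| apply DJt_pos_right]; lra.
Qed.

End SwitchingAngle.

Theorem lemma11 (alpha nu : R)
  (Halpha : PI / 8 < alpha < 3 * PI / 8)
  (Hirr : ~ exists q : Q, alpha / PI = Q2R q)
  (Hnu : PI / 4 - alpha - (1/100) < nu < PI / 4 - alpha + (1/100))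
  (Hroot : DJt alpha nu = 0) :
  forall (k : nat) (y : R),
    in_I alpha nu y -> Nat.iter k (Tmap alpha nu) y = nu ->
    ~ ex_derive (Jt alpha) y.
Proof.
  intros k. induction k as [| k IH]; intros y HI Hiter Hder.
  - simpl in Hiter. subst y. exact (not_ex_derive_Jt_nu alpha nu Halpha Hnu Hroot Hder).
  - rewrite Nat.iter_succ_r in Hiter.
    destruct (Req_dec y nu) as [-> | Hne].
    + exact (not_ex_derive_Jt_nu alpha nu Halpha Hnu Hroot Hder).
    + apply (IH (Tmap alpha nu y) (Tmap_in_I alpha nu y Halpha HI) Hiter).
      exact (ex_derive_Jt_Tmap alpha nu Halpha Hnu Hroot y HI Hne Hder).
Qed.
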